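(* Let $T$ be a countable tree without leaves (vertices of infinite degree are allowed), let $P=(p(x,y))_{x,y\in T}$ be a stochastic nearest-neighbour transition matrix on $T$, and let $\lambda\in\mathbb C$. Suppose the oriented edges of $T$ carry $\lambda$-weights $f(x,y)\in\mathbb C$ ($x\sim y$) satisfying, for every vertex $x$ and every neighbour $y$ of $x$: (i) $f(x,y)f(y,x)\neq 1$; (ii) the series $u(x,x)=\sum_{v\sim x}p(x,v)f(v,x)$ converges absolutely and $u(x,x)\neq\lambda$; (iii) $\lambda f(x,y)=p(x,y)+\bigl(u(x,x)-p(x,y)f(y,x)\bigr)f(x,y)$. Extend $f$ to all pairs by $f(x,x)=1$ and $f(x,y)=f(x_0,x_1)f(x_1,x_2)\cdots f(x_{k-1},x_k)$ when the geodesic from $x$ to $y$ is $[x=x_0,x_1,\dots,x_k=y]$. Then for every fixed $y\in T$, the function $x\mapsto f(x,y)$ satisfies $$\sum_{w\sim x}p(x,w)f(w,y)=\lambda f(x,y)\quad\text{for } x\neq y,\qquad \sum_{w\sim y}p(y,w)f(w,y)=u(y,y),$$ where the sums converge absolutely.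
   Context: A nearest-neighbour stochastic transition matrix means $p(x,y)>0$ if and only if $x$ and $y$ are neighbours ($x\sim y$), and $\sum_y p(x,y)=1$ for all $x$. The tree may have vertices of infinite degree; a leaf is a vertex of degree $1$. *)

From Stdlib Require Import Reals List.
From Coquelicot Require Import Coquelicot.
Import ListNotations.
Set Implicit Arguments.

Section Graphs.
Variable T : Type.
Variable adj : T -> T -> bool.

Fixpoint walk (x : T) (s : list T) : Prop :=
  match s with
  | [] => True
  | y :: s' => adj x y = true /\ walk y s'
  end.

Definition walk_from_to (x : T) (s : list T) (y : T) : Prop :=
  walk x s /\ last s x = y.

Definition geodesic (x : T) (s : list T) (y : T) : Prop :=
  walk_from_to x s y /\
  forall s', walk_from_to x s' y -> (length s <= length s')%nat.

Definition graph_symmetric : Prop := forall x y, adj x y = adj y x.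
Definition graph_irreflexive : Prop := forall x, adj x x = false.
Definition graph_connected : Prop := forall x y, exists s, walk_from_to x s y.
Definition has_cycle : Prop :=
  exists x0 s, NoDup (x0 :: s) /\ (2 <= length s)%nat /\ walk x0 s /\
               adj (last s x0) x0 = true.
Definition is_tree : Prop :=
  graph_symmetric /\ graph_irreflexive /\ graph_connected /\ ~ has_cycle.
Definition is_leaf (x : T) : Prop :=
  exists y, adj x y = true /\ forall z, adj x z = true -> z = y.

(* countability: an enumeration hitting every vertex exactly once *)
Definition enumerates (e : nat -> option T) : Prop :=
  forall t, exists! n, e n = Some t.

Definition nn_stochastic (e : nat -> option T) (p : T -> T -> R) : Prop :=
  (forall x y, 0 <= p x y) /\
  (forall x y, 0 < p x y <-> adj x y = true) /\
  (forall x, is_series (fun n => match e n with Some y => p x y | None => 0%R end) 1%R).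

Definition nbr_term (e : nat -> option T) (p : T -> T -> R) (x : T) (g : T -> C)
  (n : nat) : C :=
  match e n with
  | Some v => if adj x v then Cmult (RtoC (p x v)) (g v) else RtoC 0
  | None => RtoC 0
  end.

Definition nbr_abs_sum (e : nat -> option T) (p : T -> T -> R) (x : T) (g : T -> C)
  (l : C) : Prop :=
  ex_series (fun n => Cmod (nbr_term e p x g n)) /\ is_series (nbr_term e p x g) l.

End Graphs.

Fixpoint walk_prod (T : Type) (f : T -> T -> C) (x : T) (s : list T) : C :=
  match s with
  | [] => RtoC 1
  | y :: s' => Cmult (f x y) (walk_prod f y s')
  end.

From Stdlib Require Import Reals List Permutation Lia Classical Wf_nat.
From Coquelicot Require Import Coquelicot.
Import ListNotations.

(* For x <> y let x' be the first step of the geodesic from x to y. In a tree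
   the geodesic from any other neighbour w of x to y passes through x, so
   f(w,y) = f(w,x) f(x,y), while f(x,y) = f(x,x') f(x',y). Hence the neighbour
   sum at x is f(x,y) u(x,x) with the single term w = x' corrected, and (iii)
   on the edge (x,x') turns it into lam f(x,y). At x = y the sum is u(y,y) by
   (ii). *)

Lemma last_cons {A : Type} (l : list A) (b d : A) : last (b :: l) d = last l b.
Proof.
  revert b d. induction l as [|c l IH]; intros b d; [reflexivity|].
  change (last (c :: l) d = last (c :: l) b). rewrite !IH. reflexivity.
Qed.

Lemma last_app_cons {A : Type} (l1 l2 : list A) (x d : A) :
  last (l1 ++ x :: l2) d = last l2 x.
Proof.
  revert d. induction l1 as [|a l1 IH]; intros d; simpl app; rewrite last_cons; auto.
Qed.

Lemma in_last_cons {A : Type} (l : list A) (a : A) : In (last l a) (a :: l).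
Proof.
  revert a. induction l as [|b l IH]; intros a; [now left|].
  rewrite last_cons. right. apply IH.
Qed.

Lemma in_split_first {A : Type} (P : A -> Prop) (l : list A) :
  (exists z, In z l /\ P z) ->
  exists l1 z l2, l = l1 ++ z :: l2 /\ P z /\ forall a, In a l1 -> ~ P a.
Proof.
  induction l as [|c l IH]; intros [z [Hz HPz]]; [destruct Hz|].
  destruct (classic (P c)) as [Hc|Hc].
  - exists [], c, l. split; [reflexivity|]. split; [exact Hc|]. intros a [].
  - destruct Hz as [-> | Hz]; [contradiction|].
    destruct IH as [l1 [z' [l2 [-> [HPz' Hl1]]]]]; [eauto|].
    exists (c :: l1), z', l2. repeat split; auto.
    intros a [<- | Ha]; auto.
Qed.

Section Walks.
Variables (T : Type) (adj : T -> T -> bool).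

Lemma walk_app (l1 l2 : list T) (a : T) :
  walk adj a (l1 ++ l2) <-> walk adj a l1 /\ walk adj (last l1 a) l2.
Proof.
  revert a. induction l1 as [|b l1 IH]; intros a; simpl app.
  - simpl. tauto.
  - change (adj a b = true /\ walk adj b (l1 ++ l2) <->
            (adj a b = true /\ walk adj b l1) /\ walk adj (last (b :: l1) a) l2).
    rewrite IH, last_cons. tauto.
Qed.

Lemma walk_app_cons (l1 l2 : list T) (a z : T) :
  walk adj a (l1 ++ z :: l2) -> walk adj a (l1 ++ [z]) /\ walk adj z l2.
Proof.
  replace (l1 ++ z :: l2) with ((l1 ++ [z]) ++ l2) by (rewrite <- app_assoc; reflexivity).
  rewrite walk_app, last_last. tauto.
Qed.

Lemma geodesic_tail (a v b : T) (s : list T) :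
  geodesic adj a (v :: s) b -> geodesic adj v s b.
Proof.
  intros [[[Hav Hw] Hl] Hmin]. rewrite last_cons in Hl.
  split; [split; auto|].
  intros s' [Hw' Hl']. apply le_S_n, (Hmin (v :: s')).
  split; [split|]; auto. now rewrite last_cons.
Qed.

Lemma geodesic_NoDup (a b : T) (s : list T) : geodesic adj a s b -> NoDup (a :: s).
Proof.
  revert a. induction s as [|v s IH]; intros a Hg.
  - repeat constructor. intros [].
  - constructor; [|eapply IH, geodesic_tail, Hg].
    intros Hin. destruct (in_split _ _ Hin) as [l1 [l2 E]]. rewrite E in Hg.
    destruct Hg as [[Hw Hl] Hmin].
    apply walk_app_cons in Hw as [_ Hw]. rewrite last_app_cons in Hl.
    specialize (Hmin l2 (conj Hw Hl)). rewrite length_app in Hmin. simpl in Hmin. lia.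
Qed.

Lemma geodesic_exists (a b : T) (s : list T) :
  walk_from_to adj a s b -> exists g, geodesic adj a g b.
Proof.
  remember (length s) as n eqn:Hn. revert s Hn.
  induction n as [n IH] using lt_wf_ind. intros s Hn Hs.
  destruct (classic (forall s', walk_from_to adj a s' b -> length s <= length s')%nat)
    as [Hmin|Hnot].
  - exists s. split; assumption.
  - apply not_all_ex_not in Hnot as [s' Hs'].
    apply imply_to_and in Hs' as [Hs' Hlt].
    apply (IH (length s')) with s'; auto. lia.
Qed.

Section Acyclic.
Hypotheses (adj_sym : graph_symmetric adj) (adj_irrefl : graph_irreflexive adj)
  (acyclic : ~ has_cycle adj).

Lemma walk_rev (l : list T) (a b : T) :
  walk adj a (l ++ [b]) -> walk adj b (rev l ++ [a]).
Proof.
  revert a. induction l as [|c l IH]; intros a [Hac Hw].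
  - simpl. rewrite adj_sym. auto.
  - simpl. apply walk_app. rewrite last_last. split; [apply IH, Hw|].
    simpl. rewrite adj_sym. auto.
Qed.

(* Otherwise x :: A ++ z :: rev C is a cycle. *)
Lemma internally_disjoint_paths (x z : T) (A C : list T) :
  walk adj x (A ++ [z]) -> walk adj x (C ++ [z]) -> NoDup (x :: A ++ z :: C) ->
  A = [] /\ C = [].
Proof.
  intros HA HC Hnd.
  destruct (classic (A = [] /\ C = [])) as [H|Hne]; [exact H|exfalso].
  assert (Hback : walk adj z (rev C ++ [x])) by now apply walk_rev.
  apply walk_app in Hback as [HrevC Hclose].
  apply acyclic. exists x, (A ++ z :: rev C). repeat split.
  - apply Permutation_NoDup with (x :: A ++ z :: C); [|exact Hnd].
    apply perm_skip, Permutation_app_head, perm_skip, Permutation_rev.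
  - rewrite length_app. simpl. rewrite length_rev.
    destruct A, C; simpl; [tauto|lia..].
  - replace (A ++ z :: rev C) with ((A ++ [z]) ++ rev C)
      by (rewrite <- app_assoc; reflexivity).
    apply walk_app. rewrite last_last. auto.
  - rewrite last_app_cons. apply Hclose.
Qed.

Lemma path_from_neighbour_through (x x' w : T) (g h : list T) :
  NoDup (x :: x' :: g) -> walk adj x (x' :: g) -> adj x w = true -> w <> x' ->
  NoDup (w :: h) -> walk adj w h -> last h w = last (x' :: g) x -> In x (w :: h).
Proof.
  intros Hnd Hg Hxw Hwx' Hndh Hh Hlast. apply NNPP. intros Hx.
  (* The first vertex z of w :: h on x' :: g splits off two internally
     disjoint paths from x to z, through w and through x'. *)
  destruct (in_split_first (fun z => In z (x' :: g)) (w :: h)) as [A [z [B [Eh [HzG HA]]]]].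
  { exists (last h w). split; [apply in_last_cons|].
    rewrite Hlast, last_cons. apply in_last_cons. }
  destruct (in_split _ _ HzG) as [C [D EG]].
  assert (HxG : ~ In x (x' :: g)) by (inversion Hnd; assumption).
  destruct (internally_disjoint_paths x z A C) as [-> ->].
  - apply (walk_app_cons A B). rewrite <- Eh. split; assumption.
  - apply (walk_app_cons C D). rewrite <- EG. exact Hg.
  - constructor.
    + rewrite Eh in Hx. rewrite EG in HxG.
      intros Hin. apply in_app_or in Hin as [Hin|[<-|Hin]]; auto using in_or_app, in_eq.
    + apply NoDup_app.
      * apply NoDup_app_remove_r with (z :: B). rewrite <- Eh. exact Hndh.
      * apply NoDup_app_remove_r with D. apply Permutation_NoDup with (C ++ z :: D).
        -- apply Permutation_sym, Permutation_middle.
        -- rewrite <- EG. inversion Hnd; assumption.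
      * intros a Ha Hin. apply (HA a Ha). rewrite EG.
        destruct Hin as [<-|Hin]; auto using in_or_app, in_eq.
  - simpl in Eh, EG. congruence.
Qed.

Lemma geodesic_cons (x x' w y : T) (g : list T) :
  geodesic adj x (x' :: g) y -> adj x w = true -> w <> x' ->
  geodesic adj w (x :: x' :: g) y.
Proof.
  intros Hgeo Hxw Hwx'.
  assert (Hnd := geodesic_NoDup _ _ _ Hgeo).
  destruct Hgeo as [[Hg Hl] Hmin].
  split; [split|].
  - split; [rewrite adj_sym; exact Hxw | exact Hg].
  - rewrite last_cons. exact Hl.
  - intros s Hs. destruct (geodesic_exists _ _ _ Hs) as [h Hh].
    assert (Hhs : (length h <= length s)%nat) by (apply Hh, Hs).
    assert (Hndh := geodesic_NoDup _ _ _ Hh).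
    destruct Hh as [[Hwh Hlh] _].
    destruct (path_from_neighbour_through x x' w g h) as [->|Hin]; auto.
    + rewrite Hlh, Hl. reflexivity.
    + rewrite adj_irrefl in Hxw. discriminate.
    + destruct (in_split _ _ Hin) as [h1 [h2 E]]. rewrite E in Hwh, Hlh, Hhs.
      apply walk_app_cons in Hwh as [_ Hwh]. rewrite last_app_cons in Hlh.
      specialize (Hmin h2 (conj Hwh Hlh)). rewrite length_app in Hhs. simpl in *. lia.
Qed.

Lemma geodesic_weight_step (f : T -> T -> C) (x y : T) :
  graph_connected adj ->
  (forall a b s, geodesic adj a s b -> f a b = walk_prod f a s) -> x <> y ->
  exists x', adj x x' = true /\ f x y = Cmult (f x x') (f x' y) /\
    (forall w, adj x w = true -> w <> x' -> f w y = Cmult (f w x) (f x y)).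
Proof.
  intros Hconn Hext Hxy.
  destruct (Hconn x y) as [s Hs].
  destruct (geodesic_exists _ _ _ Hs) as [[|x' g] Hgeo].
  { destruct Hgeo as [[_ Hl] _]. simpl in Hl. congruence. }
  exists x'. split; [|split].
  - destruct Hgeo as [[[Hxx' _] _] _]. exact Hxx'.
  - rewrite (Hext _ _ _ Hgeo), (Hext _ _ _ (geodesic_tail _ _ _ _ Hgeo)). reflexivity.
  - intros w Hxw Hwx'.
    rewrite (Hext _ _ _ (geodesic_cons _ _ _ _ _ Hgeo Hxw Hwx')), (Hext _ _ _ Hgeo).
    reflexivity.
Qed.

End Acyclic.
End Walks.

Section SeriesUpdate.
Context {K : AbsRing} {V : NormedModule K}.

Lemma sum_n_indicator (N : nat) (c : V) n :
  sum_n (fun k => if Nat.eqb k N then c else zero) n = if Nat.ltb n N then zero else c.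
Proof.
  induction n as [|n IH].
  - rewrite sum_O. destruct N; reflexivity.
  - rewrite sum_Sn, IH.
    destruct (Nat.ltb_spec n N), (Nat.eqb_spec (S n) N), (Nat.ltb_spec (S n) N);
      try lia; rewrite ?plus_zero_r, ?plus_zero_l; reflexivity.
Qed.

Lemma is_series_indicator (N : nat) (c : V) :
  is_series (fun k => if Nat.eqb k N then c else zero) c.
Proof.
  apply filterlim_ext_loc with (fun _ => c); [|apply filterlim_const].
  exists N. intros n Hn. rewrite sum_n_indicator.
  destruct (Nat.ltb_spec n N); [lia|reflexivity].
Qed.

Lemma is_series_update (a b : nat -> V) (N : nat) (l c : V) :
  (forall n, n <> N -> b n = a n) -> b N = plus (a N) c -> is_series a l ->
  is_series b (plus l c).
Proof.
  intros Hab HbN Ha.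
  apply is_series_ext with (fun n => plus (a n) (if Nat.eqb n N then c else zero)).
  - intros n. destruct (Nat.eqb_spec n N) as [->|Hn].
    + symmetry. exact HbN.
    + rewrite plus_zero_r. symmetry. apply Hab, Hn.
  - apply is_series_plus; [exact Ha | apply is_series_indicator].
Qed.
End SeriesUpdate.

Section NeighbourSums.
Variables (T : Type) (adj : T -> T -> bool) (e : nat -> option T) (p : T -> T -> R).

Lemma nbr_abs_sum_update (x x' : T) (g h : T -> C) (c l : C) :
  enumerates e -> adj x x' = true ->
  (forall w, adj x w = true -> w <> x' -> g w = Cmult c (h w)) ->
  nbr_abs_sum adj e p x h l ->
  nbr_abs_sum adj e p x g
    (Cplus (Cmult c l) (Cmult (RtoC (p x x')) (Cminus (g x') (Cmult c (h x'))))).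
Proof.
  intros He Hxx' Hgh [[s Habs] Hser].
  destruct (He x') as [N [HN HNuniq]].
  set (tg := nbr_term adj e p x g). set (th := nbr_term adj e p x h).
  assert (Hoff : forall n, n <> N -> tg n = Cmult c (th n)).
  { intros n Hn. unfold tg, th, nbr_term.
    destruct (e n) as [v|] eqn:Ev; [|ring].
    destruct (adj x v) eqn:Hxv; [|ring].
    rewrite (Hgh v Hxv); [ring|].
    intros ->. apply Hn. symmetry. apply HNuniq, Ev. }
  assert (HatN : tg N = Cplus (Cmult c (th N))
                   (Cmult (RtoC (p x x')) (Cminus (g x') (Cmult c (h x'))))).
  { unfold tg, th, nbr_term. rewrite HN, Hxx'. ring. }
  split.
  - exists (Rplus (Rmult (Cmod c) s) (Rminus (Cmod (tg N)) (Rmult (Cmod c) (Cmod (th N))))).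
    apply (is_series_update (fun n => Rmult (Cmod c) (Cmod (th n))) _ N).
    + intros n Hn. rewrite Hoff by exact Hn. apply Cmod_mult.
    + change (Cmod (tg N) = Rplus (Rmult (Cmod c) (Cmod (th N)))
                (Rminus (Cmod (tg N)) (Rmult (Cmod c) (Cmod (th N))))). ring.
    + exact (is_series_scal (K := R_AbsRing) (Cmod c) _ _ Habs).
  - apply (is_series_update (fun n => Cmult c (th n)) _ N); [exact Hoff | exact HatN |].
    exact (is_series_scal c _ _ Hser).
Qed.
End NeighbourSums.

Theorem lemma3p1 (T : Type) (adj : T -> T -> bool) (e : nat -> option T)
  (p : T -> T -> R) (lam : C) (f : T -> T -> C) (u : T -> C) :
  enumerates e ->
  is_tree adj ->
  (forall x, ~ is_leaf adj x) ->
  nn_stochastic adj e p ->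
  (* (i) *)
  (forall x y, adj x y = true -> Cmult (f x y) (f y x) <> RtoC 1) ->
  (* (ii): u x = u(x,x) = sum_{v ~ x} p(x,v) f(v,x), absolutely convergent *)
  (forall x, nbr_abs_sum adj e p x (fun v => f v x) (u x) /\ u x <> lam) ->
  (* (iii) *)
  (forall x y, adj x y = true ->
     Cmult lam (f x y) =
     Cplus (RtoC (p x y)) (Cmult (Cminus (u x) (Cmult (RtoC (p x y)) (f y x))) (f x y))) ->
  (* extension of f to all pairs along geodesics *)
  (forall x y s, geodesic adj x s y -> f x y = walk_prod f x s) ->
  forall y : T,
    (forall x, x <> y -> nbr_abs_sum adj e p x (fun w => f w y) (Cmult lam (f x y))) /\
    nbr_abs_sum adj e p y (fun w => f w y) (u y).
Proof.
  intros Henum [Hsym [Hirr [Hconn Hacyc]]] _ _ _ Hu Hiii Hext y.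
  split; [|apply Hu].
  intros x Hxy.
  destruct (geodesic_weight_step _ _ Hsym Hirr Hacyc f x y Hconn Hext Hxy)
    as [x' [Hxx' [Hfxy Hfw]]].
  replace (Cmult lam (f x y)) with
    (Cplus (Cmult (f x y) (u x))
           (Cmult (RtoC (p x x')) (Cminus (f x' y) (Cmult (f x y) (f x' x))))).
  - apply (nbr_abs_sum_update _ _ _ _ x x' (fun w => f w y) (fun v => f v x));
      [exact Henum | exact Hxx' | | apply Hu].
    intros w Hxw Hwx'. rewrite (Hfw w Hxw Hwx'). apply Cmult_comm.
  - rewrite Hfxy.
    replace (Cmult lam (Cmult (f x x') (f x' y)))
      with (Cmult (Cmult lam (f x x')) (f x' y)) by ring.
    rewrite (Hiii x x' Hxx'). ring.
Qed.
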